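(* Let $F=P_{\ell_1}\cup\cdots\cup P_{\ell_k}$ be a linear forest with $\ell_1\ge\cdots\ge\ell_k\ge2$, $\ell_i\neq3$ for all $i$, and $F$ not of the form $kP_5$. Let $G$ be a graph containing disjoint vertex sets $X,Y$ with $|X|=\delta_F$ and $|Y|\ge |F|-\delta_F$ such that every vertex of $X$ is adjacent to every vertex of $Y$. Then $G$ contains $F$ as a subgraph provided one of the following holds: (a) some $\ell_i$ is even and $G-(X\cup Y)$ contains an edge $v_1v_2$ such that $v_1$ is adjacent to some vertex $x_1\in X$; (b) every $\ell_i$ is odd and $G-(X\cup Y)$ contains a path $v_1v_2v_3$ such that $v_1$ is adjacent to some vertex $x_1\in X$; (c) every $\ell_i$ is odd and $G-(X\cup Y)$ contains two vertex-disjoint edges $v_1v_2$, $v_3v_4$ such that $v_1x_1$ and $v_3x_2$ are edges of $G$ for some distinct $x_1,x_2\in X$.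
   Context: $P_m$ is the path on $m$ vertices; $kP_5$ denotes $k$ disjoint copies of $P_5$. $|F|=\sum\ell_i$ and $\delta_F=\sum_{i=1}^k\lfloor \ell_i/2\rfloor-1$. For $S\subseteq V(G)$, $G-S$ is the graph obtained by deleting the vertices of $S$. *)

From mathcomp Require Import all_boot.
Set Implicit Arguments. Unset Strict Implicit. Unset Printing Implicit Defensive.

(* A (finite simple) graph is a symmetric irreflexive relation [e : rel T]
   on a finite vertex type [T].  A linear forest F = P_{l_1} u ... u P_{l_k}
   is encoded by the list [ls = [:: l_1; ...; l_k]] of its path orders. *)

Definition forest_order (ls : seq nat) : nat := sumn ls.

Definition delta_F (ls : seq nat) : nat := sumn [seq l./2 | l <- ls] - 1.

(* G contains F as a subgraph: an injective map from V(F) = {(i,j) | i < k, j < l_i}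
   to V(G) sending every path edge (i,j)(i,j+1) to an edge of G. *)
Definition contains_linear_forest (T : finType) (e : rel T) (ls : seq nat) : Prop :=
  exists f : nat -> nat -> T,
    (forall i j i' j', i < size ls -> j < nth 0 ls i ->
       i' < size ls -> j' < nth 0 ls i' -> f i j = f i' j' -> i = i' /\ j = j')
    /\ (forall i j, i < size ls -> j.+1 < nth 0 ls i -> e (f i j) (f i j.+1)).

From mathcomp Require Import all_boot.
From mathcomp Require Import zify.

(* A path P_l alternating between the complete bipartite classes Y and X,
   starting in Y, uses uphalf l vertices of Y and l./2 vertices of X.
   Doing this for every component would need sum_i l_i./2 = delta_F + 1
   vertices of X, one more than |X| provides, while |Y| >= |F| - delta_F
   leaves one spare vertex of Y.  The extra structure outside X u Y saves
   the missing X-vertex: one component is realised as a "frame" path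
     pre ++ [y x y ... x y] ++ suf,
   where pre and suf consist of outside vertices and of one or two
   distinguished X-vertices, and the middle alternates between Y and X; in
   the even case with l = 2 the outside edge v1v2 is itself a component.
   All other components are zigzag paths drawn from the unused parts of X
   and Y. *)

Section Interleave.
Variable T : eqType.
Implicit Types s t : seq T.

Fixpoint interleave s t : seq T :=
  match s, t with
  | x :: s', y :: t' => x :: y :: interleave s' t'
  | x :: _, [::] => [:: x]
  | [::], _ => [::]
  end.

Lemma perm_interleave s t :
  size t <= size s <= (size t).+1 -> perm_eq (interleave s t) (s ++ t).
Proof.
elim: s t => [|x s IH] [|y t] //=; first by case: s {IH}.
rewrite !ltnS => /IH perm_st; rewrite perm_cons perm_sym -cat1s perm_catCA /=.
by rewrite perm_cons perm_sym.
Qed.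

Variable e : rel T.
Hypothesis e_sym : symmetric e.

Lemma path_interleave z s t :
  {in s, forall y, e z y} -> {in s & t, forall y x, e y x} ->
  path e z (interleave s t).
Proof.
elim: s t z => [|y s IH] [|x t] z //= z_s st; rewrite z_s ?mem_head //=.
rewrite st ?mem_head //=; apply: IH => [w w_s | w u w_s u_t].
- by rewrite e_sym st // ?mem_head // inE w_s orbT.
- by rewrite st // inE ?w_s ?u_t orbT.
Qed.

Lemma sorted_interleave s t :
  {in s & t, forall y x, e y x} -> sorted e (interleave s t).
Proof.
case: t => [|x t] st; first by case: s st => [|y []].
apply: (@path_sorted _ _ x); apply: path_interleave => // y y_s.
by rewrite e_sym st ?mem_head.
Qed.

Lemma sorted_frame pre suf s t :
  size s = (size t).+1 -> {in s & t, forall y x, e y x} ->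
  {in s, forall y, sorted e (pre ++ y :: suf)} ->
  sorted e (pre ++ interleave s t ++ suf).
Proof.
elim: t s pre => [|x t IH] [|y s] pre //= [size_s] st frame.
  by case: s size_s frame {st} => // _ /(_ y (mem_head _ _)).
rewrite -[y :: _]/([:: y; x] ++ _) catA; apply: IH => // [w u w_s u_t | w w_s].
  by rewrite st // inE ?w_s ?u_t orbT.
have w_ys : w \in y :: s by rewrite inE w_s orbT.
have := frame y (mem_head _ _); have := frame w w_ys.
rewrite -catA /= !sorted_cat_cons /= => /andP[_ ->] /andP[-> _].
by rewrite st ?mem_head // e_sym st ?mem_head.
Qed.

End Interleave.

Arguments interleave {T} s t.

(* A linear forest is found as a list of vertex-disjoint paths: the embedding
   sends the j-th vertex of the i-th component to the j-th vertex of the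
   i-th path; [x0] only serves as a default vertex for [nth]. *)
Section PathSystems.
Variables (T : finType) (e : rel T) (x0 : T).

Lemma nth_flatten_mem {ps : seq (seq T)} {i j : nat} :
  i < size ps -> j < size (nth [::] ps i) -> nth x0 (nth [::] ps i) j \in flatten ps.
Proof. by move=> lt_i lt_j; apply/flattenP; exists (nth [::] ps i); apply: mem_nth. Qed.

Lemma nth_paths_inj (ps : seq (seq T)) i j i' j' :
  uniq (flatten ps) ->
  i < size ps -> j < size (nth [::] ps i) ->
  i' < size ps -> j' < size (nth [::] ps i') ->
  nth x0 (nth [::] ps i) j = nth x0 (nth [::] ps i') j' -> i = i' /\ j = j'.
Proof.
elim: ps i i' => [|p ps IH] // [|i] [|i'] /=; rewrite cat_uniq => /and3P[p_uniq p_ps ps_uniq].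
- move=> _ lt_j _ lt_j' eq_ij; split=> //.
  by apply/eqP; rewrite -(nth_uniq x0 lt_j lt_j' p_uniq) eq_ij.
- move=> _ lt_j lt_i' lt_j' eq_ij; move/hasPn: p_ps => /(_ _ (nth_flatten_mem lt_i' lt_j')).
  by rewrite -eq_ij mem_nth.
- move=> lt_i lt_j _ lt_j' eq_ij; move/hasPn: p_ps => /(_ _ (nth_flatten_mem lt_i lt_j)).
  by rewrite eq_ij mem_nth.
- by move=> lt_i lt_j lt_i' lt_j' /(IH _ _ ps_uniq lt_i lt_j lt_i' lt_j') [-> ->].
Qed.

Lemma forest_of_paths (ps : seq (seq T)) :
  uniq (flatten ps) -> all (sorted e) ps -> contains_linear_forest e (map size ps).
Proof.
move=> ps_uniq ps_sorted; exists (fun i j => nth x0 (nth [::] ps i) j); split.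
  move=> i j i' j'; rewrite size_map => lt_i; rewrite (nth_map [::]) // => lt_j lt_i'.
  by rewrite (nth_map [::]) //; apply: nth_paths_inj.
move=> i j; rewrite size_map => lt_i; rewrite (nth_map [::]) // => lt_j.
have : sorted e (nth [::] ps i) by apply: (allP ps_sorted); apply: mem_nth.
by move/(sortedP x0); apply.
Qed.

End PathSystems.

Arguments forest_of_paths {T e} x0 {ps}.

Lemma uphalf_add_half n : uphalf n + n./2 = n.
Proof. by rewrite uphalf_half; have := odd_double_half n; lia. Qed.

Section ZigzagPaths.
Variables (T : eqType) (e : rel T).
Hypothesis e_sym : symmetric e.

Fixpoint zigzag_paths (xs ys : seq T) (ls : seq nat) : seq (seq T) :=
  if ls is l :: ls' then
    interleave (take (uphalf l) ys) (take l./2 xs)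
      :: zigzag_paths (drop l./2 xs) (drop (uphalf l) ys) ls'
  else [::].

Lemma zigzag_paths_spec xs ys ls :
  {in ys & xs, forall y x, e y x} ->
  sumn (map half ls) <= size xs -> sumn (map uphalf ls) <= size ys ->
  [/\ map size (zigzag_paths xs ys ls) = ls,
      perm_eq (flatten (zigzag_paths xs ys ls))
              (take (sumn (map half ls)) xs ++ take (sumn (map uphalf ls)) ys)
    & all (sorted e) (zigzag_paths xs ys ls)].
Proof.
elim: ls xs ys => [|l ls IH] xs ys /= ys_xs size_xs size_ys; first by rewrite !take0.
have l_split := uphalf_add_half l.
have l_balanced : l./2 <= uphalf l <= (l./2).+1.
  by rewrite uphalf_half; have := leq_b1 (odd l); lia.
have [|||size_ps perm_ps sorted_ps] := IH (drop l./2 xs) (drop (uphalf l) ys).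
- by move=> y x /mem_drop y_ys /mem_drop x_xs; apply: ys_xs.
- by rewrite size_drop; lia.
- by rewrite size_drop; lia.
have perm_zz : perm_eq (interleave (take (uphalf l) ys) (take l./2 xs))
                       (take (uphalf l) ys ++ take l./2 xs).
  by apply: perm_interleave; rewrite !size_takel; lia.
split.
- by rewrite size_ps (perm_size perm_zz) size_cat !size_takel ?uphalf_add_half //; lia.
- rewrite !takeD; apply/permP => a; move: (permP perm_zz a) (permP perm_ps a).
  by rewrite !count_cat => -> ->; lia.
- rewrite sorted_ps andbT; apply: sorted_interleave => // y x /mem_take y_ys /mem_take x_xs.
  exact: ys_xs.
Qed.

End ZigzagPaths.

Arguments zigzag_paths {T} xs ys ls.
Arguments zigzag_paths_spec {T e} e_sym {xs ys ls}.

Definition remove_at {A : Type} (i : nat) (s : seq A) : seq A := take i s ++ drop i.+1 s.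

Lemma sumn_remove_at (f : nat -> nat) ls i : i < size ls ->
  sumn (map f ls) = sumn (map f (remove_at i ls)) + f (nth 0 ls i).
Proof.
move=> lt_i; rewrite /remove_at -{1}(cat_take_drop i ls) (drop_nth 0 lt_i).
by rewrite !map_cat !sumn_cat /=; lia.
Qed.

Arguments sumn_remove_at f {ls i}.

Section SpecialPath.
Variables (T : finType) (e : rel T) (x0 : T).
Hypothesis e_sym : symmetric e.

Lemma forest_with_special_path ls i0 (sp xs ys : seq T) :
  i0 < size ls -> uniq (sp ++ xs ++ ys) -> {in ys & xs, forall y x, e y x} ->
  sumn (map half (remove_at i0 ls)) <= size xs ->
  sumn (map uphalf (remove_at i0 ls)) <= size ys ->
  sorted e sp -> size sp = nth 0 ls i0 ->
  contains_linear_forest e ls.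
Proof.
move=> lt_i0 sp_uniq ys_xs size_xs size_ys sp_sorted size_sp.
have [size_ps perm_ps sorted_ps] := zigzag_paths_spec e_sym ys_xs size_xs size_ys.
set ps := zigzag_paths _ _ _ in size_ps perm_ps sorted_ps.
have size_take_ps : size (take i0 ps) = i0.
  rewrite size_takel // -(size_map size) size_ps size_cat size_drop size_takel; lia.
have -> : ls = map size (take i0 ps ++ sp :: drop i0 ps).
  have size_take_ls : size (take i0 ls) = i0 by rewrite size_takel // ltnW.
  rewrite map_cat /= map_take map_drop size_ps size_sp /remove_at.
  by rewrite take_size_cat // drop_size_cat // -(drop_nth 0 lt_i0) cat_take_drop.
apply: (forest_of_paths x0).
- have perm_flat : perm_eq (flatten (take i0 ps ++ sp :: drop i0 ps)) (sp ++ flatten ps).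
    by rewrite flatten_cat /= perm_catCA -flatten_cat cat_take_drop.
  move: perm_ps; rewrite -(perm_cat2l sp) (perm_uniq perm_flat) => /perm_uniq ->.
  apply: subseq_uniq sp_uniq.
  by rewrite cat_subseq ?subseq_refl // cat_subseq ?take_subseq.
- by rewrite all_cat /= sp_sorted /= -all_cat cat_take_drop.
Qed.

End SpecialPath.

Arguments forest_with_special_path {T e} x0 e_sym {ls i0} sp xs ys.

Lemma forest_order_split ls :
  forest_order ls = sumn (map half ls) + sumn (map uphalf ls).
Proof.
rewrite /forest_order; elim: ls => //= l ls ->.
by rewrite uphalf_half; have := odd_double_half l; lia.
Qed.

Lemma delta_F_half ls : delta_F ls = sumn (map half ls) - 1.
Proof. by []. Qed.

Lemma part_sizes {ls : seq nat} {nX nY : nat} :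
  all (fun l => 2 <= l) ls -> ls != [::] ->
  nX = delta_F ls -> forest_order ls - delta_F ls <= nY ->
  nX.+1 = sumn (map half ls) /\ sumn (map uphalf ls) < nY.
Proof.
case: ls => [//|l ls] /= /andP[l_ge2 _] _ ->; rewrite forest_order_split delta_F_half /=.
by have := leq_b1 (odd l); have := uphalf_half l; have := odd_double_half l; lia.
Qed.

Lemma head_geq_mem (ls : seq nat) l : sorted geq ls -> l \in ls -> l <= head 0 ls.
Proof.
have geq_trans : transitive geq by move=> a b c /= le_ab le_bc; apply: leq_trans le_bc le_ab.
case: ls => [//|a s] /=; rewrite (path_sortedE geq_trans) inE => /andP[/allP le_s _].
by case/orP => [/eqP -> // | /le_s].
Qed.

Section Cases.
Variables (T : finType) (e : rel T) (X Y : {set T}) (ls : seq nat).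
Hypotheses (e_sym : symmetric e) (e_irr : irreflexive e).
Hypothesis XY_disj : [disjoint X & Y].
Hypothesis XY_adj : forall x y, x \in X -> y \in Y -> e x y.
Hypothesis ls_ge2 : all (fun l => 2 <= l) ls.
Hypothesis ls_ne3 : all (fun l => l != 3) ls.
Hypothesis card_X : #|X|.+1 = sumn (map half ls).
Hypothesis card_Y : sumn (map uphalf ls) < #|Y|.

Lemma card_unused (xf : seq T) :
  uniq xf -> {subset xf <= X} -> #|X :\: [set x in xf]| = #|X| - size xf.
Proof.
move=> xf_uniq xf_X; rewrite cardsD (setIidPr _) ?cardsE ?(card_uniqP xf_uniq) //.
by apply/subsetP => x; rewrite inE => /xf_X.
Qed.

Lemma uniq_layout (vs xf : seq T) :
  uniq vs -> {in vs, forall v, v \notin X :|: Y} -> uniq xf -> {subset xf <= X} ->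
  uniq (vs ++ xf ++ enum (X :\: [set x in xf]) ++ enum Y).
Proof.
move=> vs_uniq vs_out xf_uniq xf_X.
have X_Y x : x \in X -> x \notin Y by move=> x_X; rewrite (disjointFr XY_disj x_X).
rewrite cat_uniq vs_uniq cat_uniq xf_uniq cat_uniq !enum_uniq /=; apply/and3P; split.
- apply/hasPn => v; rewrite !mem_cat !mem_enum !inE => /or3P[/xf_X v_X | /andP[_ v_X] | v_Y];
  by apply: (contraL (vs_out v)); rewrite inE ?v_X ?v_Y ?orbT.
- apply/hasPn => v; rewrite mem_cat !mem_enum !inE => /orP[/andP[//] | v_Y].
  by apply: contraL v_Y => /xf_X /X_Y.
- rewrite andbT; apply/hasPn => v; rewrite !mem_enum inE => v_Y.
  by apply/negP => /andP[_ /X_Y]; rewrite v_Y.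
Qed.

Lemma enum_adj (xf : seq T) : {in enum Y & enum (X :\: [set x in xf]), forall y x, e y x}.
Proof. by move=> y x; rewrite !mem_enum inE => y_Y /andP[_ x_X]; rewrite e_sym XY_adj. Qed.

Lemma forest_from_frame i0 (vs xf pre suf : seq T) k :
  i0 < size ls -> perm_eq (pre ++ suf) (vs ++ xf) ->
  uniq vs -> {in vs, forall v, v \notin X :|: Y} -> uniq xf -> {subset xf <= X} ->
  sumn (map half (remove_at i0 ls)) + k + size xf <= #|X| ->
  sumn (map uphalf (remove_at i0 ls)) + k < #|Y| ->
  {in Y, forall y, sorted e (pre ++ y :: suf)} ->
  size pre + size suf + k.*2.+1 = nth 0 ls i0 ->
  contains_linear_forest e ls.
Proof.
move=> lt_i0 perm_frame vs_uniq vs_out xf_uniq xf_X size_X size_Y frame size_frame.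
have [y0 _] : exists y0, y0 \in Y by apply/card_gt0P; lia.
set xs := enum (X :\: [set x in xf]); set ys := enum Y.
have size_xs : size xs = #|X| - size xf by rewrite -cardE card_unused.
have size_ys : size ys = #|Y| by rewrite -cardE.
have perm_mid : perm_eq (interleave (take k.+1 ys) (take k xs)) (take k.+1 ys ++ take k xs).
  by apply: perm_interleave; rewrite !size_takel ?size_xs ?size_ys; lia.
have ys_xs : {in ys & xs, forall y x, e y x} := enum_adj xf.
apply: (forest_with_special_path y0 e_sym
          (pre ++ interleave (take k.+1 ys) (take k xs) ++ suf) (drop k xs) (drop k.+1 ys) lt_i0).
- have perm_all :
    perm_eq (pre ++ interleave (take k.+1 ys) (take k xs) ++ suf ++ drop k xs ++ drop k.+1 ys)
            (vs ++ xf ++ xs ++ ys).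
    apply/permP => a; move: (permP perm_frame a) (permP perm_mid a).
    move: (congr1 (count a) (cat_take_drop k xs)) (congr1 (count a) (cat_take_drop k.+1 ys)).
    by rewrite !count_cat; lia.
  by rewrite -!catA (perm_uniq perm_all) uniq_layout.
- by move=> y x /mem_drop y_ys /mem_drop x_xs; apply: ys_xs.
- by rewrite size_drop size_xs; lia.
- by rewrite size_drop size_ys; lia.
- apply: sorted_frame => //.
  + by rewrite !size_takel ?size_xs ?size_ys; lia.
  + by move=> y x /mem_take y_ys /mem_take x_xs; apply: ys_xs.
  + by move=> y /mem_take; rewrite mem_enum; apply: frame.
- by rewrite !size_cat (perm_size perm_mid) size_cat !size_takel ?size_xs ?size_ys; lia.
Qed.


Lemma edge_neq {a b : T} : e a b -> a != b.
Proof. by apply: contraTneq => ->; rewrite e_irr. Qed.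

(* F has a component, since X is one short of a positive X-part. *)
Lemma ls_nonempty : 0 < size ls.
Proof. by case: ls card_X. Qed.

(* Odd orders are at least 5, since orders are at least 2 and never 3. *)
Lemma odd_part_shape {l : nat} : l \in ls -> odd l -> exists k, l = (k.+2).*2.+1.
Proof.
move=> l_ls l_odd; have := allP ls_ge2 l l_ls; have := allP ls_ne3 l l_ls.
have := odd_double_half l; rewrite l_odd /= => l_def l_ne3 l_ge2.
by exists (l./2 - 2); lia.
Qed.

(* For l = 2 it is the outside edge v2 v1;
   otherwise it is the frame v2 v1 x1 [y x ... y], whose middle has l/2 - 1
   vertices of Y and l/2 - 2 of X, so that the component uses l/2 - 1
   X-vertices instead of l/2. *)
Lemma even_part_forest v1 v2 x1 :
  has (fun l => ~~ odd l) ls ->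
  v1 \notin X :|: Y -> v2 \notin X :|: Y -> e v1 v2 -> x1 \in X -> e v1 x1 ->
  contains_linear_forest e ls.
Proof.
move=> /hasP[l l_ls l_even].
have [i0 lt_i0 nth_l] := nthP 0 l_ls.
have l_ge2 : 2 <= l by apply: (allP ls_ge2).
have [h l_def] : exists h, l = h.*2.
  by exists l./2; rewrite -[LHS]odd_double_half (negbTE l_even).
have := sumn_remove_at half lt_i0; have := sumn_remove_at uphalf lt_i0.
rewrite nth_l l_def half_double uphalf_double => sum_u sum_h.
case: h l_def sum_u sum_h => [|[|k]] l_def sum_u sum_h; rewrite {}l_def in l_ge2 nth_l => //.
- have budget_X : sumn (map half (remove_at i0 ls)) <= #|X :\: [set x in [::]]|.
    by rewrite card_unused //= subn0; lia.
  have budget_Y : sumn (map uphalf (remove_at i0 ls)) <= #|Y| by lia.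
  move=> v1_out v2_out e12 _ _.
  apply: (forest_with_special_path v1 e_sym [:: v2; v1]
            (enum (X :\: [set x in [::]])) (enum Y) lt_i0).
  + apply: (uniq_layout _ [::]) => //; first by rewrite /= inE eq_sym edge_neq.
    by apply/allP; rewrite /= v1_out v2_out.
  + exact: enum_adj.
  + by rewrite -cardE.
  + by rewrite -cardE.
  + by rewrite /= e_sym e12.
  + by rewrite nth_l.
- have budget_X : sumn (map half (remove_at i0 ls)) + k + 1 <= #|X| by lia.
  have budget_Y : sumn (map uphalf (remove_at i0 ls)) + k < #|Y| by lia.
  have size_path : 3 + 0 + k.*2.+1 = nth 0 ls i0 by rewrite nth_l; lia.
  move=> v1_out v2_out e12 x1_X e1x.
  apply: (forest_from_frame i0 [:: v2; v1] [:: x1] [:: v2; v1; x1] [::] k lt_i0) => //.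
  + by rewrite /= inE eq_sym edge_neq.
  + by apply/allP; rewrite /= v1_out v2_out.
  + by move=> x; rewrite inE => /eqP ->.
  + by move=> y y_Y; rewrite /= e_sym e12 e1x XY_adj.
Qed.

(* Case (b): the largest component P_l, l = 2h + 1 >= 5, is the frame
   v3 v2 v1 x1 [y x ... y] using h - 1 X-vertices instead of h. *)
Lemma odd_path_forest v1 v2 v3 x1 :
  all odd ls ->
  all (fun v => v \notin X :|: Y) [:: v1; v2; v3] -> v1 != v3 -> e v1 v2 -> e v2 v3 ->
  x1 \in X -> e v1 x1 ->
  contains_linear_forest e ls.
Proof.
move=> ls_odd; have L_ls := mem_nth 0 ls_nonempty.
have [k L_def] := odd_part_shape L_ls (allP ls_odd _ L_ls).
have := sumn_remove_at half ls_nonempty; have := sumn_remove_at uphalf ls_nonempty.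
rewrite L_def /= half_double uphalf_double => sum_u sum_h.
have budget_X : sumn (map half (remove_at 0 ls)) + k + 1 <= #|X| by lia.
have budget_Y : sumn (map uphalf (remove_at 0 ls)) + k < #|Y| by lia.
have size_path : 4 + 0 + k.*2.+1 = nth 0 ls 0 by rewrite L_def; lia.
move=> vs_out v13 e12 e23 x1_X e1x.
apply: (forest_from_frame 0 [:: v3; v2; v1] [:: x1] [:: v3; v2; v1; x1] [::] k ls_nonempty) => //.
- rewrite /= !inE !negb_or eq_sym (edge_neq e23) eq_sym v13.
  by rewrite eq_sym (edge_neq e12).
- by apply/allP; move: vs_out; rewrite /= !andbT => /and3P[-> -> ->].
- by move=> x; rewrite inE => /eqP ->.
- by move=> y y_Y; rewrite /= (e_sym v3) e23 (e_sym v2) e12 e1x XY_adj.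
Qed.

(* Case (c): F is not 5 P_5 and all orders are odd, so the largest component
   P_l has l = 2h + 1 >= 7 and is the frame v2 v1 x1 [y x ... y] x2 v3 v4,
   using h - 1 X-vertices instead of h. *)
Lemma odd_matching_forest v1 v2 v3 v4 x1 x2 :
  sorted geq ls -> ~~ all (fun l => l == 5) ls -> all odd ls ->
  uniq [:: v1; v2; v3; v4] -> all (fun v => v \notin X :|: Y) [:: v1; v2; v3; v4] ->
  e v1 v2 -> e v3 v4 -> x1 \in X -> x2 \in X -> x1 != x2 -> e v1 x1 -> e v3 x2 ->
  contains_linear_forest e ls.
Proof.
move=> ls_sorted /allPn[l l_ls l_ne5] ls_odd; have L_ls := mem_nth 0 ls_nonempty.
have [k' L_def] := odd_part_shape L_ls (allP ls_odd _ L_ls).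
have [k'' l_def] := odd_part_shape l_ls (allP ls_odd _ l_ls).
have l_le_L : l <= nth 0 ls 0 by rewrite nth0; apply: head_geq_mem.
have [k L_def'] : exists k, nth 0 ls 0 = (k.+3).*2.+1.
  by case: k' L_def => [|k] L_def; [move: l_le_L l_ne5; rewrite L_def l_def; lia | exists k].
have := sumn_remove_at half ls_nonempty; have := sumn_remove_at uphalf ls_nonempty.
rewrite L_def' /= half_double uphalf_double => sum_u sum_h.
have budget_X : sumn (map half (remove_at 0 ls)) + k + 2 <= #|X| by lia.
have budget_Y : sumn (map uphalf (remove_at 0 ls)) + k < #|Y| by lia.
have size_path : 3 + 3 + k.*2.+1 = nth 0 ls 0 by rewrite L_def'; lia.
move=> vs_uniq vs_out e12 e34 x1_X x2_X x12 e1x e3x.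
apply: (forest_from_frame 0 [:: v2; v1; v3; v4] [:: x1; x2] [:: v2; v1; x1] [:: x2; v3; v4] k
          ls_nonempty) => //.
- rewrite /= !perm_cons; apply/permPl; exact: (perm_catC [:: x1; x2] [:: v3; v4]).
- move: vs_uniq; rewrite /= !inE !negb_or => /and4P[/and3P[n12 n13 n14] /andP[n23 n24] n34 _].
  by rewrite eq_sym n12 n13 n14 n23 n24 n34.
- by apply/allP; move: vs_out; rewrite /= !andbT => /and4P[-> -> -> ->].
- by rewrite /= inE x12.
- by move=> x; rewrite !inE => /orP[] /eqP ->.
- by move=> y y_Y; rewrite /= (e_sym v2) e12 e1x XY_adj // (e_sym y) XY_adj // (e_sym x2) e3x e34.
Qed.

End Cases.

Arguments even_part_forest {T e X Y ls} _ _ _ _ _ _ _ _ {v1 v2 x1}.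
Arguments odd_path_forest {T e X Y ls} _ _ _ _ _ _ _ _ {v1 v2 v3 x1}.
Arguments odd_matching_forest {T e X Y ls} _ _ _ _ _ _ _ {v1 v2 v3 v4 x1 x2}.

Theorem mainTheorem6 (T : finType) (e : rel T) (ls : seq nat) (X Y : {set T}) :
  symmetric e -> irreflexive e ->
  sorted geq ls ->
  all (fun l => 2 <= l) ls ->
  all (fun l => l != 3) ls ->
  ~~ all (fun l => l == 5) ls ->
  [disjoint X & Y] ->
  #|X| = delta_F ls ->
  forest_order ls - delta_F ls <= #|Y| ->
  (forall x y, x \in X -> y \in Y -> e x y) ->
  ( (has (fun l => ~~ odd l) ls /\
      exists v1 v2 x1, [/\ v1 \notin X :|: Y, v2 \notin X :|: Y, e v1 v2,
                           x1 \in X & e v1 x1])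
    \/ (all odd ls /\
      exists v1 v2 v3 x1, [/\ all (fun v => v \notin X :|: Y) [:: v1; v2; v3],
                              v1 != v3, e v1 v2, e v2 v3 & (x1 \in X /\ e v1 x1)])
    \/ (all odd ls /\
      exists v1 v2 v3 v4 x1 x2,
        [/\ uniq [:: v1; v2; v3; v4], all (fun v => v \notin X :|: Y) [:: v1; v2; v3; v4],
            e v1 v2, e v3 v4 &
            [/\ x1 \in X, x2 \in X, x1 != x2, e v1 x1 & e v3 x2]]) ) ->
  contains_linear_forest e ls.
Proof.
move=> e_sym e_irr ls_sorted ls_ge2 ls_ne3 not_all5 XY_disj card_X card_Y XY_adj cases.
have ls_nil : ls != [::] by apply: contraNneq not_all5 => ->.
have [budget_X budget_Y] := part_sizes ls_ge2 ls_nil card_X card_Y.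
case: cases => [[ls_even [v1 [v2 [x1 [v1_out v2_out e12 x1_X e1x]]]]]
              | [[ls_odd [v1 [v2 [v3 [x1 [vs_out v13 e12 e23 [x1_X e1x]]]]]]]
              | [ls_odd [v1 [v2 [v3 [v4 [x1 [x2 [vs_uniq vs_out e12 e34
                  [x1_X x2_X x12 e1x e3x]]]]]]]]]]].
- exact: (even_part_forest e_sym e_irr XY_disj XY_adj ls_ge2 ls_ne3 budget_X budget_Y
            ls_even v1_out v2_out e12 x1_X e1x).
- exact: (odd_path_forest e_sym e_irr XY_disj XY_adj ls_ge2 ls_ne3 budget_X budget_Y
            ls_odd vs_out v13 e12 e23 x1_X e1x).
- exact: (odd_matching_forest e_sym XY_disj XY_adj ls_ge2 ls_ne3 budget_X budget_Y
            ls_sorted not_all5 ls_odd vs_uniq vs_out e12 e34 x1_X x2_X x12 e1x e3x).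
Qed.
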